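(* Let $m,k,n\ge1$ be integers; let $\lambda_i,\mu_i>0$ ($i\le k$), $\alpha_j,\beta_j,u_j,v_j>0$ ($j\le n$); let $\theta:\{0,\dots,m\}\to\mathbb{R}$ satisfy $0\le\theta\le1$, $\theta(b)>0$ for $b<m$, $\theta(m)=0$. Consider the CTMC on the set $\mathcal{S}$ of vectors $w=(x_1,\dots,x_k;a_1,\dots,a_n)$, $x_i\in\mathbb{Z}_{\ge0}$, $a_j\in\{I,W,T\}$, with $\mathrm{busy}(w)=\sum_i x_i+\sum_j1_{\{a_j=T\}}\le m$, whose only nonzero rates are: $x\to x+e_i$ at rate $\lambda_i\theta(\mathrm{busy}(w))$ and $x+e_i\to x$ at rate $(x_i+1)\mu_i$; and, for each $j$ changing only $a_j$: $I\to W$ at rate $\alpha_j$, $W\to I$ at rate $\beta_j$, $W\to T$ at rate $u_j\theta(\mathrm{busy}(w))$ ($w$ the current state), $T\to W$ at rate $v_j$. Its steady state distribution has the form $p(w)=B\big(\prod_{r=0}^{\mathrm{busy}(w)-1}\theta(r)\big)\big(\prod_{i}\rho_i^{x_i}/x_i!\big)\prod_j(\alpha_j/\beta_j)^{1_{\{a_j=W\}}}(\alpha_ju_j/(\beta_jv_j))^{1_{\{a_j=T\}}}$, $\rho_i=\lambda_i/\mu_i$, for a normalizing constant $B$. Let $\rho=\sum_i\rho_i$, $g=\min[n,m]$ and $\mathrm{i}=\sqrt{-1}$. Define $$C_t=\prod_{j=1}^n\Big[1+\frac{\alpha_j}{\beta_j}+e^{\frac{-2\pi \mathrm{i} t}{n+1}}\frac{\alpha_ju_j}{\beta_jv_j}\Big],\quad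 t\in\{0,\dots,n\},\qquad c_b=\frac{1}{n+1}\sum_{t=0}^nC_te^{\frac{2\pi \mathrm{i} tb}{n+1}},\quad b\in\{0,\dots,g\}.$$ Then $$B=\frac{1}{\sum_{b=0}^g\sum_{x=0}^{m-b}\frac{\rho^x}{x!}\big(\prod_{r=0}^{x+b-1}\theta(r)\big)c_b}.$$ Further, in the special case with no non-persistent users (i.e. $\rho\to0$), the normalizing constant is replaced by $$\tilde B=\frac{1}{\sum_{b=0}^g\big(\prod_{r=0}^{b-1}\theta(r)\big)c_b}.$$
   Context: Multi-channel access model with $m$ channels, $k$ classes of non-persistent users and $n$ persistent users with activity states Idle ($I$), Waiting ($W$), Transmitting ($T$). Empty products $\prod_{r=0}^{-1}\theta(r)$ equal $1$. In the case with no non-persistent users, the steady state probability of persistent configuration $a$ is $\tilde B\big(\prod_{r=0}^{\mathrm{busy}_p(a)-1}\theta(r)\big)\prod_j(\alpha_j/\beta_j)^{1_{\{a_j=W\}}}(\alpha_ju_j/(\beta_jv_j))^{1_{\{a_j=T\}}}$ with $\mathrm{busy}_p(a)=\sum_j1_{\{a_j=T\}}\le m$. *)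

From HB Require Import structures.
From mathcomp Require Import all_boot all_order all_algebra.
From mathcomp Require Import all_classical all_reals all_analysis.
From mathcomp Require Import complex.
Set Implicit Arguments. Unset Strict Implicit. Unset Printing Implicit Defensive.
Import Order.TTheory GRing.Theory Num.Theory.
Local Open Scope ring_scope.

Inductive activity := Idle | Waiting | Transmitting.

Definition activity_to_ord (s : activity) : 'I_3 :=
  match s with Idle => inord 0 | Waiting => inord 1 | Transmitting => inord 2 end.
Definition ord_to_activity (i : 'I_3) : activity :=
  match val i with 0 => Idle | 1 => Waiting | _ => Transmitting end.
Lemma activity_ordK : cancel activity_to_ord ord_to_activity.
Proof. by case; rewrite /ord_to_activity /= inordK. Qed.
HB.instance Definition _ := Finite.copy activity (can_type activity_ordK).

Section Model.
Variable R : realType.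

Definition theta_prod (theta : nat -> R) (b : nat) : R := \prod_(r < b) theta r.

Definition busy_p (n : nat) (a : {ffun 'I_n -> activity}) : nat :=
  \sum_(j < n) (a j == Transmitting : nat).

Definition busy (m k n : nat)
  (w : {ffun 'I_k -> 'I_m.+1} * {ffun 'I_n -> activity}) : nat :=
  \sum_(i < k) (w.1 i : nat) + busy_p w.2.

Definition pers_factor (n : nat) (alpha beta u v : 'I_n -> R)
  (a : {ffun 'I_n -> activity}) : R :=
  \prod_(j < n) match a j with
                | Idle => 1
                | Waiting => alpha j / beta j
                | Transmitting => alpha j * u j / (beta j * v j)
                end.

Definition weight (m k n : nat) (theta : nat -> R) (lam mu : 'I_k -> R)
  (alpha beta u v : 'I_n -> R)
  (w : {ffun 'I_k -> 'I_m.+1} * {ffun 'I_n -> activity}) : R :=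
  theta_prod theta (busy w)
  * (\prod_(i < k) ((lam i / mu i) ^+ w.1 i / (w.1 i)`!%:R))
  * pers_factor alpha beta u v w.2.

Definition weight_p (n : nat) (theta : nat -> R) (alpha beta u v : 'I_n -> R)
  (a : {ffun 'I_n -> activity}) : R :=
  theta_prod theta (busy_p a) * pers_factor alpha beta u v a.

Local Open Scope complex_scope.

Definition expi (x : R) : R[i] := cos x +i* sin x.

Definition Ct (n : nat) (alpha beta u v : 'I_n -> R) (t : nat) : R[i] :=
  \prod_(j < n) ((1 + alpha j / beta j)%:C
                 + expi (- (2 * pi * t%:R / n.+1%:R))
                   * (alpha j * u j / (beta j * v j))%:C).

Definition cb (n : nat) (alpha beta u v : 'I_n -> R) (b : nat) : R[i] :=
  (n.+1%:R)^-1 * \sum_(t < n.+1)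
     Ct alpha beta u v t * expi (2 * pi * t%:R * b%:R / n.+1%:R).

Definition denom (m k n : nat) (theta : nat -> R) (lam mu : 'I_k -> R)
  (alpha beta u v : 'I_n -> R) : R[i] :=
  let rho := \sum_(i < k) lam i / mu i in
  \sum_(b < (minn n m).+1) \sum_(x < (m - b).+1)
     ((rho ^+ x / x`!%:R * theta_prod theta (x + b))%:C
      * cb alpha beta u v b).

Definition denom_p (m n : nat) (theta : nat -> R)
  (alpha beta u v : 'I_n -> R) : R[i] :=
  \sum_(b < (minn n m).+1) ((theta_prod theta b)%:C * cb alpha beta u v b).

End Model.

From HB Require Import structures.
From mathcomp Require Import all_boot all_order all_algebra.
From mathcomp Require Import all_classical all_reals all_analysis.
From mathcomp Require Import complex.
From mathcomp Require Import ring lra zify.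
Set Implicit Arguments. Unset Strict Implicit. Unset Printing Implicit Defensive.
Import Order.TTheory GRing.Theory Num.Theory.
Local Open Scope ring_scope.

(* Sum the unnormalised weights over the feasible states, grouping them by the
   number b of transmitting persistent users and the total number s of
   non-persistent users.  The persistent configurations with b transmitters
   contribute the coefficient of X^b in
     P(X) = prod_j (1 + alpha_j/beta_j + alpha_j u_j/(beta_j v_j) X),
   a polynomial of degree at most n with C_t = P(omega^-t), omega = e^(2 pi i/(n+1));
   so c_b, the inverse discrete Fourier transform of the C_t, is exactly that
   coefficient.  The non-persistent states with s users contribute rho^s/s! by
   the multinomial theorem.  The normalising sum therefore equals the stated
   denominator, and B is its inverse; without non-persistent users the same
   grouping by b gives the formula for B~. *)

Lemma sum_partition_nat (K : pzSemiRingType) (I : finType) (f : I -> nat) M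
    (Q : pred nat) (G : nat -> K) (P : I -> K) :
  (forall i, Q (f i) -> (f i <= M)%N) ->
  \sum_(i | Q (f i)) G (f i) * P i
  = \sum_(b < M.+1 | Q b) G b * \sum_(i | f i == b) P i.
Proof.
move=> f_le; have fK i : Q (f i) -> @inord M (f i) = f i :> nat.
  by move=> /f_le f_leM; rewrite inordK // ltnS.
rewrite (partition_big (fun i => inord (f i) : 'I_M.+1) Q) => [|i /fK ->] //=.
apply: eq_bigr => b Qb; rewrite mulr_sumr.
apply: eq_big => [i|i /andP[Qi /eqP <-]]; last by rewrite fK.
have [Qi|nQi] := boolP (Q (f i)); first by rewrite -val_eqE /= fK.
by apply/esym/negbTE; apply: contraNneq nQi => ->.
Qed.

Lemma big_ord_minn (V : nmodType) n m (F : nat -> V) :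
  \sum_(b < (minn n m).+1) F b = \sum_(b < n.+1 | (b <= m)%N) F b.
Proof.
rewrite (big_ord_widen n.+1 F) ?ltnS ?geq_minl //.
by apply: eq_bigl => b; rewrite ltnS leq_min -ltnS ltn_ord.
Qed.

Lemma big_ord_triangle (V : nmodType) n m (F : nat -> nat -> V) :
  \sum_(b < (minn n m).+1) \sum_(x < (m - b).+1) F b x
  = \sum_(b < n.+1) \sum_(x < m.+1 | (x + b <= m)%N) F b x.
Proof.
rewrite (@big_ord_minn _ n m (fun b => \sum_(x < (m - b).+1) F b x)).
rewrite [RHS](bigID (fun b : 'I_n.+1 => (b <= m)%N)) /=.
rewrite [X in _ = _ + X]big1 ?addr0 => [|b /negbTE b_gtm]; last first.
  by rewrite big_pred0 // => x; apply: contraFF b_gtm; lia.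
apply: eq_bigr => b b_lem.
rewrite (big_ord_widen m.+1 (F b)) ?ltnS ?leq_subr //.
by apply: eq_bigl => x /=; lia.
Qed.

Lemma sum_expr_prim_root (F : idomainType) (N : nat) (z : F) e :
  N.-primitive_root z ->
  \sum_(t < N) (z ^+ e) ^+ t = if (N %| e)%N then N%:R else 0.
Proof.
move=> prim_z; rewrite (prim_order_dvd prim_z).
have [ze1|ze_neq1] := eqVneq (z ^+ e) 1.
  by under eq_bigr do rewrite ze1 expr1n; rewrite sumr_const card_ord.
have /eqP := subrX1 (z ^+ e) N.
rewrite exprAC (prim_expr_order prim_z) expr1n subrr eq_sym mulf_eq0 subr_eq0.
by rewrite (negbTE ze_neq1) => /eqP.
Qed.

Lemma dvdn_addBn_ord (N b i : nat) : (b < N)%N -> (i < N)%N ->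
  (N %| b + N - i)%N = (i == b).
Proof.
move=> bN iN; apply/idP/eqP => [/dvdnP[q hq]|->]; last by rewrite addKn dvdnn.
by case: q hq => [|[|q]]; rewrite ?mulSn; lia.
Qed.

Lemma coef_inverse_dft (F : fieldType) (N : nat) (z : F) (p : {poly F}) b :
  N.-primitive_root z -> (size p <= N)%N -> (b < N)%N ->
  N%:R^-1 * \sum_(t < N) p.[z ^- t] * z ^+ (t * b) = p`_b.
Proof.
move=> prim_z sizep bN.
have z_neq0 : z != 0 by rewrite (prim_root_eq0 prim_z) -lt0n (prim_order_gt0 prim_z).
have shift t (i : 'I_N) : (z ^- t) ^+ i * z ^+ (t * b) = (z ^+ (b + N - i)) ^+ t.
  apply: (mulIf (expf_neq0 (t * i) z_neq0)).
  rewrite exprVn mulrAC [z ^+ (t * i)]exprM mulVf ?expf_neq0 // mul1r.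
  rewrite -!exprM -exprD [((b + N - i) * t)%N]mulnC -mulnDr subnK; last first.
    by rewrite (leq_trans (ltnW (ltn_ord i))) ?leq_addl.
  rewrite mulnDr exprD [(t * N)%N]mulnC [z ^+ (N * t)]exprM.
  by rewrite (prim_expr_order prim_z) expr1n mulr1.
under eq_bigr do rewrite (horner_coef_wide _ sizep) mulr_suml.
rewrite exchange_big /=.
under eq_bigr => i _ do under eq_bigr do rewrite -mulrA shift.
under eq_bigr => i _ do rewrite -mulr_sumr sum_expr_prim_root // dvdn_addBn_ord //.
rewrite (bigD1 (Ordinal bN)) //= eqxx big1 => [|i neq_ib]; last first.
  suff -> : (i == b :> nat) = false by rewrite mulr0.
  by apply: contraNF neq_ib => /eqP ib; apply/eqP/val_inj.
by rewrite addr0 mulrC mulfK // (prim_root_natf_neq0 prim_z).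
Qed.

Lemma coef_prod_sumZXn (K : comNzRingType) (I J : finType) (c : I -> J -> K)
    (e : J -> nat) b :
  (\prod_i \sum_j c i j *: 'X^(e j))`_b
  = \sum_(f : {ffun I -> J} | \sum_i e (f i) == b) \prod_i c i (f i).
Proof.
rewrite bigA_distr_bigA coef_sum [RHS]big_mkcond /=; apply: eq_bigr => f _.
rewrite scaler_prod prodrXr coefZ coefXn eq_sym.
by case: eqP; rewrite ?mulr1 ?mulr0.
Qed.

Section TruncatedExponential.
Variable F : numFieldType.

Definition exp_trunc (c : F) m : {poly F} := \poly_(x < m.+1) (c ^+ x / x`!%:R).

Lemma exprDn_div_fact (a c : F) s :
  (a + c) ^+ s / s`!%:R
  = \sum_(j < s.+1) a ^+ j / j`!%:R * (c ^+ (s - j) / (s - j)`!%:R).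
Proof.
rewrite addrC exprDn mulr_suml; apply: eq_bigr => j _.
have j_les : (j <= s)%N by rewrite -ltnS.
have fact_neq0 i : i`!%:R != 0 :> F by rewrite pnatr_eq0 -lt0n fact_gt0.
have bin_neq0 : 'C(s, j)%:R != 0 :> F by rewrite pnatr_eq0 -lt0n bin_gt0.
rewrite -(bin_fact j_les) !natrM mulr_natr -mulr_natl.
by field; rewrite !fact_neq0 bin_neq0.
Qed.

Lemma coef_prod_exp_trunc m k (rho : 'I_k -> F) s : (s <= m)%N ->
  (\prod_(i < k) exp_trunc (rho i) m)`_s = (\sum_i rho i) ^+ s / s`!%:R.
Proof.
elim: k rho s => [|k IHk] rho s s_lem.
  by rewrite !big_ord0 coef1 expr0n; case: s s_lem => [|s] _; rewrite ?divr1 ?mul0r.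
rewrite !big_ord_recr /= coefM exprDn_div_fact; apply: eq_bigr => j _.
have j_les : (j <= s)%N by rewrite -ltnS.
by rewrite IHk ?(leq_trans j_les) // coef_poly ltnS (leq_trans (leq_subr j s)).
Qed.

Lemma multinomial_fact m k (rho : 'I_k -> F) s : (s <= m)%N ->
  \sum_(x : {ffun 'I_k -> 'I_m.+1} | \sum_i (x i : nat) == s)
     \prod_i (rho i ^+ x i / (x i)`!%:R)
  = (\sum_i rho i) ^+ s / s`!%:R.
Proof.
move=> s_lem; rewrite -(@coef_prod_exp_trunc m k rho s s_lem) /exp_trunc.
by rewrite (eq_bigr _ (fun i _ => poly_def _ _)) coef_prod_sumZXn.
Qed.

End TruncatedExponential.
Section ComplexExponential.
Variable R : realType.
Local Open Scope complex_scope.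
Implicit Types x y : R.

Lemma expiD x y : expi x * expi y = expi (x + y).
Proof.
rewrite /expi cosD sinD; apply/eqP; rewrite eq_complex /=.
by apply/andP; split; apply/eqP; ring.
Qed.

Lemma expi0 : expi (0 : R) = 1.
Proof. by rewrite /expi cos0 sin0. Qed.

Lemma expiN x : expi (- x) = (expi x)^-1.
Proof.
have ex_neq0 : expi x != 0.
  apply: contra_neq (oner_neq0 R[i]) => ex0.
  by rewrite -expi0 -(subrr x) -expiD ex0 mul0r.
by apply: (mulIf ex_neq0); rewrite mulVf // expiD addNr expi0.
Qed.

Lemma expiX x k : expi x ^+ k = expi (k%:R * x).
Proof.
elim: k => [|k IHk]; first by rewrite mul0r expi0.
by rewrite exprS IHk expiD mulrSr mulrDl mul1r addrC.
Qed.

Lemma expi_2pi : expi (2 * pi : R) = 1.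
Proof. by rewrite /expi mulr_natl cos2pi sin2pi. Qed.

Lemma expi_neq1 x : 0 < x < 2 * pi -> expi x != 1.
Proof.
move=> /andP[x_gt0 x_lt2pi]; rewrite /expi eq_complex /= negb_and.
have [x_ltpi|pi_lex] := ltP x pi; first by rewrite orbC gt_eqF // sin_gt0_pi // x_gt0.
move: pi_lex; rewrite le_eqVlt => /orP[/eqP <-|pi_ltx].
  by rewrite cospi lt_eqF //; lra.
have -> : x = (x - pi) + pi by rewrite subrK.
rewrite sinDpi oppr_eq0 orbC gt_eqF // sin_gt0_pi //; apply/andP; split; lra.
Qed.

Lemma prim_root_expi N : (0 < N)%N -> N.-primitive_root (expi (2 * pi / N%:R : R)).
Proof.
move=> N_gt0; have N_neq0 : N%:R != 0 :> R by rewrite pnatr_eq0 -lt0n.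
have order_N : expi (2 * pi / N%:R : R) ^+ N = 1 by rewrite expiX mulrC divfK ?expi_2pi.
have [d prim_d d_dvdN] := prim_order_exists N_gt0 order_N.
have d_gt0 := prim_order_gt0 prim_d.
have [d_ltN|N_led] := ltnP d N; last first.
  by move: prim_d; rewrite (_ : d = N) //; apply/eqP; rewrite eqn_leq N_led dvdn_leq.
suff : expi (d%:R * (2 * pi / N%:R) : R) != 1.
  by rewrite -expiX (prim_expr_order prim_d) eqxx.
apply: expi_neq1.
have ratio_bounds : 0 < (d%:R / N%:R : R) < 1.
  by rewrite ltr_pdivrMr ?ltr0n // mul1r ltr_nat d_ltN divr_gt0 ?ltr0n.
have pi_gt0 := pi_gt0 R.
rewrite mulrCA; nra.
Qed.

End ComplexExponential.

Section PersistentPolynomial.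
Variables (R : realType) (n : nat) (alpha beta u v : 'I_n -> R).
Local Open Scope complex_scope.

Definition activity_factor j (s : activity) : R :=
  match s with
  | Idle => 1
  | Waiting => alpha j / beta j
  | Transmitting => alpha j * u j / (beta j * v j)
  end.

Definition pers_poly : {poly R[i]} :=
  \prod_(j < n) \sum_(s : activity) (activity_factor j s)%:C *: 'X^(s == Transmitting).

Definition pers_level b : R :=
  \sum_(a : {ffun 'I_n -> activity} | busy_p a == b) pers_factor alpha beta u v a.

Lemma activity_neq : [&& Idle != Waiting, Idle != Transmitting & Waiting != Transmitting].
Proof. by apply/and3P; split; apply/negP => /eqP. Qed.

Lemma sum_activity (V : nmodType) (F : activity -> V) :
  \sum_(s : activity) F s = F Idle + F Waiting + F Transmitting.
Proof.
have /and3P[nIW nIT nWT] := activity_neq.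
rewrite (bigD1 Idle) // (bigD1 Waiting) 1?eq_sym ?nIW //.
rewrite (bigD1 Transmitting) 1?eq_sym ?nIT 1?eq_sym ?nWT //.
by rewrite big1 => [|[]]; rewrite ?eqxx ?andbF //= addr0 addrA.
Qed.

Lemma busy_p_le (a : {ffun 'I_n -> activity}) : (busy_p a <= n)%N.
Proof.
rewrite /busy_p -[n in (_ <= n)%N]card_ord -sum1_card.
by apply: leq_sum => j _; exact: leq_b1.
Qed.

Lemma coef_pers_poly b : pers_poly`_b = (pers_level b)%:C.
Proof.
rewrite coef_prod_sumZXn rmorph_sum; apply: eq_bigr => a _.
by rewrite -rmorph_prod; congr (_%:C); apply: eq_bigr => j _; case: (a j).
Qed.

Lemma size_pers_poly : (size pers_poly <= n.+1)%N.
Proof.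
apply/leq_sizeP => b n_ltb; rewrite coef_pers_poly /pers_level big_pred0 // => a.
by apply: contraTF n_ltb => /eqP <-; rewrite -leqNgt busy_p_le.
Qed.

Let omega : R[i] := expi (2 * pi / n.+1%:R).

Lemma Ct_pers_poly t : Ct alpha beta u v t = pers_poly.[omega ^- t].
Proof.
rewrite /Ct /pers_poly horner_prod; apply: eq_bigr => j _.
have /and3P[_ /negbTE nIT /negbTE nWT] := activity_neq.
rewrite horner_sum sum_activity !hornerZ !hornerXn nIT nWT eqxx expr0 expr1 !mulr1.
rewrite /omega expiX -expiN -rmorphD [in RHS]mulrC.
by congr (_ + expi _ * _); rewrite mulrCA mulrA.
Qed.

Lemma cb_pers_level b : (b <= n)%N -> cb alpha beta u v b = (pers_level b)%:C.
Proof.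
move=> b_len; have prim_omega : n.+1.-primitive_root omega by apply: prim_root_expi.
rewrite -coef_pers_poly -(coef_inverse_dft prim_omega size_pers_poly b_len).
congr (_ * _); apply: eq_bigr => t _.
rewrite Ct_pers_poly; congr (_ * _); rewrite /omega expiX natrM; congr expi; ring.
Qed.

End PersistentPolynomial.

Section Normalisation.
Variables (R : realType) (m k n : nat) (lam mu : 'I_k -> R).
Variables (alpha beta u v : 'I_n -> R) (theta : nat -> R).
Local Open Scope complex_scope.
Local Notation level := (pers_level alpha beta u v).

Lemma denom_p_sum_weight_p :
  denom_p m theta alpha beta u v
  = (\sum_(a : {ffun 'I_n -> activity} | (busy_p a <= m)%N)
       weight_p theta alpha beta u v a)%:C.
Proof.
rewrite (@sum_partition_nat _ _ (@busy_p n) n (fun b => (b <= m)%N)) => [|a _].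
  rewrite /denom_p
    (big_ord_minn n m (fun b => (theta_prod theta b)%:C * cb alpha beta u v b)).
  rewrite rmorph_sum; apply: eq_bigr => b _.
  by rewrite rmorphM cb_pers_level // -ltnS.
exact: busy_p_le.
Qed.

Lemma sum_weight_by_level :
  \sum_(w : {ffun 'I_k -> 'I_m.+1} * {ffun 'I_n -> activity} | (busy w <= m)%N)
     weight theta lam mu alpha beta u v w
  = \sum_(b < n.+1) \sum_(s < m.+1 | (s + b <= m)%N)
       theta_prod theta (s + b) * level b * ((\sum_i lam i / mu i) ^+ s / s`!%:R).
Proof.
pose X (x : {ffun 'I_k -> 'I_m.+1}) := \prod_i ((lam i / mu i) ^+ x i / (x i)`!%:R).
pose sx (x : {ffun 'I_k -> 'I_m.+1}) := (\sum_i (x i : nat))%N.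
transitivity (\sum_x \sum_(a | (sx x + busy_p a <= m)%N)
  (theta_prod theta (sx x + busy_p a) * X x) * pers_factor alpha beta u v a).
  by rewrite pair_big_dep; apply: eq_big => [[x a]|[x a] _].
under eq_bigr => x _.
  rewrite (@sum_partition_nat _ _ (@busy_p n) n (fun b => (sx x + b <= m)%N)
             (fun b => theta_prod theta (sx x + b) * X x)) => [|a _].
    rewrite big_mkcond; over.
  exact: busy_p_le.
rewrite exchange_big; apply: eq_bigr => b _ /=.
rewrite -big_mkcond /=; under eq_bigr do rewrite mulrAC.
rewrite (@sum_partition_nat _ _ sx m (fun s => (s + b <= m)%N)
           (fun s => theta_prod theta (s + b) * level b) X) => [|x]; last first.
  exact: leq_trans (leq_addr _ _).
by apply: eq_bigr => s s_lem; rewrite multinomial_fact // -ltnS.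
Qed.

Lemma denom_sum_weight :
  denom m theta lam mu alpha beta u v
  = (\sum_(w : {ffun 'I_k -> 'I_m.+1} * {ffun 'I_n -> activity} | (busy w <= m)%N)
       weight theta lam mu alpha beta u v w)%:C.
Proof.
rewrite sum_weight_by_level /denom /=; set rho := \sum_(i < k) lam i / mu i.
rewrite (big_ord_triangle n m (fun b x =>
           (rho ^+ x / x`!%:R * theta_prod theta (x + b))%:C * cb alpha beta u v b)).
rewrite rmorph_sum; apply: eq_bigr => b _.
rewrite rmorph_sum; apply: eq_bigr => s _.
by rewrite cb_pers_level -1?ltnS // -rmorphM; congr _%:C; ring.
Qed.

End Normalisation.

Theorem lemma1 (R : realType) (m k n : nat)
  (lam mu : 'I_k -> R) (alpha beta u v : 'I_n -> R) (theta : nat -> R) :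
  (1 <= m)%N -> (1 <= k)%N -> (1 <= n)%N ->
  (forall i, 0 < lam i) -> (forall i, 0 < mu i) ->
  (forall j, 0 < alpha j) -> (forall j, 0 < beta j) ->
  (forall j, 0 < u j) -> (forall j, 0 < v j) ->
  (forall b, (b <= m)%N -> 0 <= theta b <= 1) ->
  (forall b, (b < m)%N -> 0 < theta b) ->
  theta m = 0 ->
  (forall B : R,
     \sum_(w : {ffun 'I_k -> 'I_m.+1} * {ffun 'I_n -> activity}
             | (busy w <= m)%N)
        B * weight theta lam mu alpha beta u v w = 1 ->
     (B%:C)%C = (denom m theta lam mu alpha beta u v)^-1)
  /\
  (forall Bt : R,
     \sum_(a : {ffun 'I_n -> activity} | (busy_p a <= m)%N)
        Bt * weight_p theta alpha beta u v a = 1 ->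
     (Bt%:C)%C = (denom_p m theta alpha beta u v)^-1).
Proof.
(* The normalising identities are purely combinatorial. *)
move=> *; split => [B|Bt]; rewrite -mulr_sumr mulrC => /mulr1_eq <-.
  by rewrite denom_sum_weight fmorphV.
by rewrite denom_p_sum_weight_p fmorphV.
Qed.
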